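(* Let $b\ge 2$ be fixed and $N\ge 2$. Then \[ \int_0^1|\overleftarrow{S}_b(\alpha)|^2\,d\alpha\ll_b N\log N. \]
   Context: For a positive integer $n$ with $L$ digits in base $b$, $n=\sum_{0\leq i<L}\varepsilon_i(n)b^i$ ($\varepsilon_i(n)\in\{0,\dots,b-1\}$, $\varepsilon_{L-1}(n)\neq0$), its digital reverse is $\overleftarrow{n}=\sum_{0\leq i<L}\varepsilon_i(n)b^{L-1-i}$. With $e(x)=\exp(2\pi ix)$, \[ \overleftarrow{S}_b(\alpha)=\sum_{\substack{p\text{ prime},\ \overleftarrow{p}\leq N\\ (\overleftarrow{p},b^3-b)=1}}e(\overleftarrow{p}\alpha)\log p. \] *)

From HB Require Import structures.
From mathcomp Require Import all_boot all_order all_algebra.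
From mathcomp Require Import all_classical all_reals all_analysis.
From mathcomp Require Import complex.
Set Implicit Arguments. Unset Strict Implicit. Unset Printing Implicit Defensive.
Import Order.TTheory GRing.Theory Num.Theory.
Local Open Scope ring_scope.

Definition digit (b i n : nat) : nat := (n %/ b ^ i) %% b.

(* number L of base-b digits of n > 0 (b >= 2): b^(L-1) <= n < b^L *)
Definition ndigits (b n : nat) : nat := (trunc_log b n).+1.

Definition drev (b n : nat) : nat :=
  (\sum_(i < ndigits b n) digit b i n * b ^ (ndigits b n - 1 - i))%N.

Definition ee (R : realType) (x : R) : R[i] :=
  Complex (cos (2 * pi * x)) (sin (2 * pi * x)).

(* The range p <= b*N is only a finite
   enumeration bound: every prime p with drev b p <= N satisfies p <= b*N
   (if b does not divide p then p < b^L <= b * drev p; otherwise p <= b). *)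
Definition Srev (R : realType) (b N : nat) (alpha : R) : R[i] :=
  \sum_(p < (b * N).+1 | prime p && (drev b p <= N)%N
                          && coprime (drev b p) (b ^ 3 - b))
     ee (((drev b p)%:R * alpha)) * real_complex R (ln (p%:R : R)).

From HB Require Import structures.
From mathcomp Require Import all_boot all_order all_algebra.
From mathcomp Require Import all_classical all_reals all_analysis.
From mathcomp Require Import complex.
From mathcomp Require Import ring lra zify.
Import Order.TTheory GRing.Theory Num.Theory.
Import numFieldTopology.Exports numFieldNormedType.Exports.
Local Open Scope ring_scope.

(* Expanding |S|^2 and integrating over [0, 1] kills every cross term
   e((m - n) alpha) with m <> n, so the integral is the sum of ln p * ln q over
   pairs of primes p, q <= bN with the same digital reverse.  Reversal is
   injective on the integers not divisible by b, and the only prime divisible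
   by b is b itself, so every p has at most two partners q, each with
   ln q <= ln (bN) <= b ln N.  The integral is therefore at most
   2 b ln N * theta(bN), and Chebyshev's bound theta(n) <= n ln 4 (the primes in
   ]m+1, 2m+1] all divide 'C(2m+1, m) <= 4^m) gives C N ln N. *)

Section Primorial.
Local Open Scope nat_scope.

Definition primorial n := \prod_(p < n.+1 | prime p) p.

Lemma primorialE n : primorial n = \prod_(0 <= p < n.+1 | prime p) p.
Proof. by rewrite /primorial big_mkord. Qed.

Lemma primorialS n :
  primorial n.+1 = primorial n * (if prime n.+1 then n.+1 else 1).
Proof. by rewrite !primorialE big_mkcond big_nat_recr //= -big_mkcond. Qed.

Lemma prime_coprime_fact p m : prime p -> m < p -> coprime p m`!.
Proof.
move=> pr_p; elim: m => [|m IHm] lt_mp; first by rewrite coprimen1.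
rewrite factS coprimeMr IHm ?andbT 1?ltnW // prime_coprime //.
by apply/negP => /dvdn_leq; lia.
Qed.

Lemma bin_mid_le m : 'C(m.*2.+1, m) <= 4 ^ m.
Proof.
have symC : 'C(m.*2.+1, m.+1) = 'C(m.*2.+1, m).
  by rewrite -bin_sub; [congr 'C(_, _) |]; lia.
have two_terms : 'C(m.*2.+1, m) + 'C(m.*2.+1, m.+1) <= 2 ^ m.*2.+1.
  have := expnDn 1 1 m.*2.+1; rewrite addn1 => ->.
  have ltm : m < m.*2.+2 by lia.
  have ltm1 : m.+1 < m.*2.+2 by lia.
  rewrite (bigD1 (Ordinal ltm)) // (bigD1 (Ordinal ltm1)) /=; last first.
    by rewrite -val_eqE /=; lia.
  by rewrite !exp1n !muln1 addnA leq_addr.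
have pow4 : 2 ^ m.*2 = 4 ^ m by rewrite -mul2n expnM.
by move: two_terms; rewrite symC addnn expnS pow4 -mul2n leq_pmul2l.
Qed.

Lemma prod_primes_mid_dvd_bin m :
  \prod_(m.+2 <= p < m.*2.+2 | prime p) p %| 'C(m.*2.+1, m).
Proof.
set Q := \prod_(_ <= p < _ | _) p.
have coQ : coprime Q m`!.
  rewrite /Q big_nat_cond; elim/big_ind: _ => [|x y|p /andP[/andP[lo _] pr_p]].
  - exact: coprime1n.
  - by rewrite coprimeMl => -> ->.
  - by apply: prime_coprime_fact => //; lia.
have prodE : \prod_(m.+2 <= k < m.*2.+2) k = 'C(m.*2.+1, m) * m`!.
  have le_m : m <= m.*2.+1 by lia.
  apply/eqP; rewrite -(eqn_pmul2l (fact_gt0 m.+1)) -fact_split; last lia.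
  rewrite -(bin_fact le_m) (_ : m.*2.+1 - m = m.+1); last lia.
  by rewrite [m.+1`! * _]mulnC -mulnA.
rewrite -(Gauss_dvdl _ coQ) -prodE (bigID prime) /=.
exact: dvdn_mulr.
Qed.

Lemma primorial_le n : primorial n <= 4 ^ n.
Proof.
elim/ltn_ind: n => n IHn.
have [n_lt3 | n_ge3] := ltnP n 3.
  by case: n n_lt3 {IHn} => [|[|[|n]]] // _; rewrite primorialE unlock.
have [odd_n | even_n] := boolP (odd n); last first.
  case: n n_ge3 even_n IHn => // n n_ge3 even_n IHn.
  have not_prime : prime n.+1 = false.
    by apply/negP => /even_prime [|odd_n]; [lia | rewrite odd_n in even_n].
  by rewrite primorialS not_prime muln1 (leq_trans (IHn n _)) // leq_exp2l.
set m := n./2.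
have nE : n = m.*2.+1 by rewrite -[n in LHS]odd_double_half odd_n.
have splitE : primorial n =
    primorial m.+1 * \prod_(m.+2 <= p < m.*2.+2 | prime p) p.
  by rewrite !primorialE nE (@big_cat_nat _ _ _ m.+2) //=; lia.
have le_mid : \prod_(m.+2 <= p < m.*2.+2 | prime p) p <= 4 ^ m.
  apply: leq_trans (bin_mid_le m).
  by apply: dvdn_leq; [rewrite bin_gt0; lia | exact: prod_primes_mid_dvd_bin].
have pow_split : 4 ^ m.*2.+1 = 4 ^ m.+1 * 4 ^ m.
  by rewrite -expnD; congr (4 ^ _); lia.
by rewrite splitE nE pow_split leq_mul // IHn //; lia.
Qed.

Lemma leq_mul_exp b N : 1 < N -> b * N <= N ^ b.
Proof. by case: b => // b N_gt1; rewrite expnSr leq_mul2r ltn_expl ?orbT. Qed.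

End Primorial.

Section Digits.
Local Open Scope nat_scope.
Variable b : nat.
Hypothesis b_gt1 : 1 < b.

Let b_gt0 : 0 < b. Proof. exact: ltnW. Qed.

Definition from_digits L (d : nat -> nat) := \sum_(i < L) d i * b ^ i.

Lemma digit0 n : digit b 0 n = n %% b.
Proof. by rewrite /digit expn0 divn1. Qed.

Lemma digitS i n : digit b i.+1 n = digit b i (n %/ b).
Proof. by rewrite /digit expnS divnMA. Qed.

Lemma from_digitsS L d :
  from_digits L.+1 d = from_digits L (fun i => d i.+1) * b + d 0.
Proof.
rewrite /from_digits big_ord_recl expn0 muln1 addnC big_distrl /=.
by congr (_ + _); apply: eq_bigr => i _; rewrite /bump add1n expnSr mulnA.
Qed.

Lemma from_digits_lt L d : (forall i, d i < b) -> from_digits L d < b ^ L.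
Proof.
elim: L d => [|L IHL] d lt_d; first by rewrite /from_digits big_ord0.
have := IHL _ (fun i => lt_d i.+1); have := lt_d 0.
rewrite from_digitsS expnSr; nia.
Qed.

Lemma digit_from_digits L d i :
  (forall i, d i < b) -> i < L -> digit b i (from_digits L d) = d i.
Proof.
elim: L d i => [|L IHL] d [|i] lt_d // lt_iL; rewrite from_digitsS.
  by rewrite digit0 modnMDl modn_small.
by rewrite digitS divnMDl // divn_small // addn0 IHL.
Qed.

Lemma eq_from_digit L m n : m < b ^ L -> n < b ^ L ->
  (forall i, i < L -> digit b i m = digit b i n) -> m = n.
Proof.
elim: L m n => [|L IHL] m n; first by rewrite expn0 !ltnS !leqn0 => /eqP-> /eqP->.
rewrite expnSr => lt_m lt_n eq_d.
rewrite (divn_eq m b) (divn_eq n b) -!digit0 eq_d //; congr (_ * _ + _).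
apply: IHL; rewrite ?ltn_divLR // => i lt_iL.
by rewrite -!digitS eq_d.
Qed.

Lemma drevE m :
  drev b m = from_digits (ndigits b m) (fun j => digit b (trunc_log b m - j) m).
Proof.
rewrite /drev /from_digits /ndigits (reindex_inj rev_ord_inj) /=.
apply: eq_bigr => j _; have lt_j := ltn_ord j.
by congr (digit _ _ _ * b ^ _); lia.
Qed.

Lemma drev_lt m : drev b m < b ^ ndigits b m.
Proof. by rewrite drevE from_digits_lt // => j; rewrite ltn_pmod. Qed.

Lemma digit_drev m j : j < ndigits b m ->
  digit b j (drev b m) = digit b (trunc_log b m - j) m.
Proof. by move=> lt_j; rewrite drevE digit_from_digits // => i; rewrite ltn_pmod. Qed.

(* The leading digit of [drev b m] is the last digit of [m]. *)
Lemma drev_ge m : ~~ (b %| m) -> b ^ trunc_log b m <= drev b m.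
Proof.
move=> ndvd_bm; rewrite leqNgt; apply: contra ndvd_bm => lt_drev.
have := @digit_drev m _ (ltnSn (trunc_log b m)).
by rewrite subnn digit0 /digit divn_small // mod0n => /esym/eqP.
Qed.

Lemma ndigits_drev m : ~~ (b %| m) -> ndigits b (drev b m) = ndigits b m.
Proof.
move=> ndvd_bm; rewrite /ndigits (@trunc_log_eq _ (trunc_log b m)) //.
by rewrite drev_ge // drev_lt.
Qed.

Lemma drev_inj : {in [pred m | ~~ (b %| m)] &, injective (drev b)}.
Proof.
move=> m n; rewrite !inE => ndvd_m ndvd_n eq_drev.
have eq_log : trunc_log b m = trunc_log b n.
  by apply: succn_inj; rewrite -!/(ndigits _ _) -ndigits_drev // eq_drev ndigits_drev.
apply: (@eq_from_digit (ndigits b m)); first exact: trunc_log_ltn.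
  by rewrite /ndigits eq_log trunc_log_ltn.
move=> i lt_i; have le_i : i <= trunc_log b m := lt_i.
have lt_j : trunc_log b m - i < ndigits b m by rewrite ltnS leq_subr.
rewrite -{1}(subKn le_i) -digit_drev // eq_drev digit_drev; last by rewrite /ndigits -eq_log.
by rewrite -eq_log subKn.
Qed.

Lemma card_prime_drev_fiber k m (A : pred 'I_k) :
  (forall q, q \in A -> prime q /\ drev b q = m) -> #|A| <= 2.
Proof.
move=> fiberA; rewrite -(cardID [pred q : 'I_k | b %| q] A).
have b_neq1 : b != 1 by rewrite neq_ltn b_gt1 orbT.
apply: (leq_add (n1 := 1) (n2 := 1)); apply/card_le1_eqP => p q; rewrite !inE.
- move=> /andP[Ap dvd_p] /andP[Aq dvd_q]; apply: val_inj => /=.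
  have [[pr_p _] [pr_q _]] := (fiberA p Ap, fiberA q Aq).
  by rewrite -(prime_nt_dvdP pr_p b_neq1 dvd_p) -(prime_nt_dvdP pr_q b_neq1 dvd_q).
- move=> /andP[ndvd_p Ap] /andP[ndvd_q Aq]; apply: val_inj => /=.
  have [[_ drev_p] [_ drev_q]] := (fiberA p Ap, fiberA q Aq).
  by apply: drev_inj; rewrite ?inE // drev_p drev_q.
Qed.
End Digits.

Section TrigonometricSums.
Variable R : realType.

Lemma continuous_cos_scale (k : R) : continuous (fun x : R => cos (k * x)).
Proof.
move=> x; apply: (continuous_comp (f := *%R k)); first exact: mulrl_continuous.
exact: continuous_cos.
Qed.

Lemma integrable_cos_scale (k : R) :
  lebesgue_measure.-integrable `[0%R, 1%R] (fun x => (cos (k * x))%:E).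
Proof.
apply: (continuous_compact_integrable (f := fun x => cos (k * x))).
  exact: segment_compact.
exact/continuous_subspaceT/continuous_cos_scale.
Qed.

Lemma is_derive_sin_scale (k x : R) :
  is_derive x (1 : R) (fun x => sin (k * x)) (k * cos (k * x)).
Proof.
have dlin : is_derive x (1 : R) ( *%R k) k.
  by have := is_deriveZ k (is_derive_id x (1 : R)); rewrite /GRing.scale /= mulr1.
by rewrite mulrC; exact: is_derive1_comp (is_derive_sin (k * x)) dlin.
Qed.

Lemma integral_cos_scale (k : R) : k != 0 ->
  (\int[lebesgue_measure]_(x in `[0%R, 1%R]) (cos (k * x))%:E = (sin k / k)%:E)%E.
Proof.
move=> k_neq0; pose F x := k^-1 * sin (k * x).
have dF (x : R) : is_derive x (1 : R) F (cos (k * x)).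
  by rewrite -[cos _](mulKf k_neq0); exact: is_deriveZ (is_derive_sin_scale k x).
have cF (x : R) : {for x, continuous F}.
  by apply/differentiable_continuous/derivable1_diffP; exact: (dF x).(ex_derive).
rewrite (@continuous_FTC2 _ _ F) ?ltr01 //.
- by rewrite /F -EFinB mulr1 mulr0 sin0 mulr0 subr0 mulrC.
- exact/continuous_subspaceT/(continuous_cos_scale k).
- split; first by move=> x _; exact: (dF x).(ex_derive).
  + exact/cvg_at_right_filter/cF.
  + exact/cvg_at_left_filter/cF.
- by move=> x _; rewrite derive1E (dF x).(derive_val).
Qed.

Lemma sin_2pi_natB (m n : nat) : sin (2 * pi * (m%:R - n%:R)) = 0 :> R.
Proof.
have sin_2pi_nat (k : nat) : sin (2 * pi * k%:R) = 0 :> R.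
  have -> : 2 * pi * k%:R = 0 + pi *+ 2 *+ k :> R by rewrite add0r !mulr_natr; ring.
  by rewrite (periodicn (@sinD2pi R)) sin0.
by rewrite mulrBr sinB !sin_2pi_nat mul0r mulr0 subr0.
Qed.

Lemma integral_cos_2pi_natB (m n : nat) :
  (\int[lebesgue_measure]_(x in `[0%R, 1%R]) (cos (2 * pi * (m%:R - n%:R) * x : R))%:E
   = (m == n)%:R%:E)%E.
Proof.
have [<- | neq_mn] := eqVneq m n.
  under eq_integral do rewrite subrr mulr0 mul0r cos0.
  by rewrite integral_cst //= lebesgue_measure_itv /= lte01 oppr0 adde0 mul1e.
rewrite (@integral_cos_scale (2 * pi * (m%:R - n%:R))) ?sin_2pi_natB ?mul0r //.
by rewrite !mulf_eq0 !negb_or pnatr_eq0 (gt_eqF (pi_gt0 R)) subr_eq0 eqr_nat.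
Qed.

Lemma sum_Complex (I : finType) (P : pred I) (a c : I -> R) :
  \sum_(i | P i) Complex (a i) (c i) =
  Complex (\sum_(i | P i) a i) (\sum_(i | P i) c i).
Proof. by apply: (big_rec3 (fun x y z => x = Complex y z)) => // i x y z _ ->. Qed.

Lemma sqr_normc_sum_ee (I : finType) (P : pred I) (x w : I -> R) (al : R) :
  Normc.normc (\sum_(i | P i) ee (x i * al) * real_complex R (w i)) ^+ 2 =
  \sum_(ij | P ij.1 && P ij.2)
     w ij.1 * w ij.2 * cos (2 * pi * (x ij.1 - x ij.2) * al).
Proof.
have -> : \sum_(i | P i) ee (x i * al) * real_complex R (w i) =
    Complex (\sum_(i | P i) w i * cos (2 * pi * (x i * al)))
            (\sum_(i | P i) w i * sin (2 * pi * (x i * al))).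
  by rewrite -sum_Complex; apply: eq_bigr => i _; rewrite /ee /=; congr Complex; ring.
rewrite /Normc.normc sqr_sqrtr ?addr_ge0 ?sqr_ge0 //.
rewrite -(pair_big P P (fun i j => w i * w j * cos (2 * pi * (x i - x j) * al))) /=.
rewrite !expr2 !mulr_suml -big_split; apply: eq_bigr => i _ /=.
rewrite !mulr_sumr -big_split; apply: eq_bigr => j _ /=.
rewrite (_ : 2 * pi * (x i - x j) * al = 2 * pi * (x i * al) - 2 * pi * (x j * al)).
  by rewrite cosB; ring.
by ring.
Qed.

Lemma integral_sqr_normc_sum_ee (I : finType) (P : pred I) (n : I -> nat) (w : I -> R) :
  (\int[lebesgue_measure]_(al in `[0%R, 1%R])
     (Normc.normc (\sum_(i | P i) ee ((n i)%:R * al) * real_complex R (w i)) ^+ 2)%:E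
   = (\sum_(ij | P ij.1 && P ij.2 && (n ij.1 == n ij.2)) w ij.1 * w ij.2)%:E)%E.
Proof.
under eq_integral => al _.
  rewrite sqr_normc_sum_ee -sumEFin.
  under eq_bigr => ij _ do rewrite EFinM.
  over.
rewrite integral_sum //; last by move=> ij; exact/integrableZl/integrable_cos_scale.
under eq_bigr => ij _ do rewrite (integralZl _ (integrable_cos_scale _)) // integral_cos_2pi_natB.
rewrite -sumEFin [in RHS]big_mkcondr /=.
by apply: eq_bigr => ij _; case: eqP; rewrite ?mule1 ?mule0.
Qed.
End TrigonometricSums.

Section LogarithmicSums.
Variable R : realType.

Lemma ler_sum_subpred (I : finType) (P Q : pred I) (F : I -> R) :
  (forall i, P i -> Q i) -> (forall i, Q i -> 0 <= F i) ->
  \sum_(i | P i) F i <= \sum_(i | Q i) F i.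
Proof.
move=> sub_PQ F_ge0; rewrite [leRHS](bigID P) /=.
rewrite (eq_bigl (fun i => Q i && P i)) => [|i]; last first.
  by case: (boolP (P i)) => [/sub_PQ -> | _]; rewrite ?andbF.
by rewrite lerDl sumr_ge0 // => i /andP[/F_ge0].
Qed.

Lemma ln_nat_ge0 n : 0 <= ln (n%:R : R).
Proof. by case: n => [|n]; [rewrite ln0 | apply: ln_ge0; rewrite ler1n]. Qed.

Lemma ln_natM_le b N : (1 < N)%N -> ln ((b * N)%:R : R) <= b%:R * ln N%:R.
Proof.
move=> N_gt1; have [->|b_gt0] := posnP b; first by rewrite mul0n !mulr0n mul0r ln0.
have N_gt0 : (0 < N)%N := ltnW N_gt1.
rewrite mulr_natl -lnXn ?ltr0n // -natrX ler_ln ?posrE ?ltr0n ?muln_gt0 ?expn_gt0 ?b_gt0 ?N_gt0 //.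
by rewrite ler_nat; exact: leq_mul_exp.
Qed.

Lemma ln_prod_nat (I : Type) (r : seq I) (P : pred I) (F : I -> nat) :
  (forall i, P i -> 0 < F i)%N ->
  ln ((\prod_(i <- r | P i) F i)%:R : R) = \sum_(i <- r | P i) ln (F i)%:R.
Proof.
move=> F_gt0.
suff [_ //] : (0 < \prod_(i <- r | P i) F i)%N /\
    ln ((\prod_(i <- r | P i) F i)%:R : R) = \sum_(i <- r | P i) ln (F i)%:R.
elim/big_rec2: _ => [|i m y Pi [m_gt0 <-]]; first by rewrite ln1.
by rewrite muln_gt0 F_gt0 // natrM lnM // posrE ltr0n // F_gt0.
Qed.

Lemma sum_ln_primes_le n :
  \sum_(p < n.+1 | prime p) ln (p%:R : R) <= n%:R * ln 4.
Proof.
rewrite -ln_prod_nat => [|p /prime_gt0 //].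
rewrite mulr_natl -lnXn // ler_ln ?posrE -?natrX ?ltr0n ?expn_gt0 ?ler_nat ?primorial_le //.
by apply: prodn_cond_gt0 => p /prime_gt0.
Qed.

Lemma sum_ln_drev_fiber_le b k m (A : pred 'I_k.+1) : (1 < b)%N ->
  (forall q, A q -> prime q /\ drev b q = m) ->
  \sum_(q | A q) ln (q%:R : R) <= 2 * ln k%:R.
Proof.
move=> b_gt1 fiberA; apply: (@le_trans _ _ (\sum_(q in A) ln (k%:R : R))).
  apply: ler_sum => q /fiberA[/prime_gt0 q_gt0 _].
  have le_qk : (q <= k)%N by rewrite -ltnS.
  by rewrite ler_ln ?posrE ?ltr0n ?ler_nat // (leq_trans q_gt0).
rewrite sumr_const -[_ *+ #|A|]mulr_natl; apply: ler_wpM2r; first exact: ln_nat_ge0.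
by rewrite ler_nat; exact: (@card_prime_drev_fiber b b_gt1 _ m A fiberA).
Qed.

Lemma sum_diag_le (I : finType) (P : pred I) (n : I -> nat) (w : I -> R) (M : R) :
  (forall i, P i -> 0 <= w i) ->
  (forall i, P i -> \sum_(j | P j && (n i == n j)) w j <= M) ->
  \sum_(ij | P ij.1 && P ij.2 && (n ij.1 == n ij.2)) w ij.1 * w ij.2
    <= M * \sum_(i | P i) w i.
Proof.
move=> w_ge0 fiber_le.
have -> : \sum_(ij | P ij.1 && P ij.2 && (n ij.1 == n ij.2)) w ij.1 * w ij.2 =
    \sum_(i | P i) \sum_(j | P j && (n i == n j)) w i * w j.
  by rewrite pair_big_dep; apply: eq_bigl => -[i j] /=; rewrite andbA.
rewrite mulr_sumr; apply: ler_sum => i Pi.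
by rewrite -mulr_sumr [M * _]mulrC; apply: ler_wpM2l; [exact: w_ge0 | exact: fiber_le].
Qed.
End LogarithmicSums.

Theorem lemma4p11 (R : realType) (b : nat) (hb : (2 <= b)%N) :
  exists C : R, 0 < C /\
    forall N : nat, (2 <= N)%N ->
      (\int[lebesgue_measure]_(alpha in `[0%R, 1%R])
          ((Normc.normc (Srev b N alpha)) ^+ 2)%:E
       <= (C * N%:R * ln (N%:R : R))%:E)%E.
Proof.
have ln4_gt0 : 0 < ln (4 : R) by rewrite ln_gt0 // ltr1n.
exists (2 * b%:R ^+ 2 * ln 4); split.
  have b_gt0 : 0 < b%:R :> R by rewrite ltr0n; lia.
  by rewrite !mulr_gt0 ?exprn_gt0.
move=> N N_gt1.
pose P (p : 'I_(b * N).+1) :=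
  prime p && (drev b p <= N)%N && coprime (drev b p) (b ^ 3 - b).
have fiber_le p : P p ->
    \sum_(q | P q && (drev b p == drev b q)) ln (q%:R : R) <= 2 * ln (b * N)%:R.
  move=> _; apply: (@sum_ln_drev_fiber_le R b _ (drev b p) _ hb) => q.
  by move=> /andP[/andP[/andP[pr_q _] _] /eqP ->].
rewrite (@integral_sqr_normc_sum_ee R _ P (fun p => drev b p)) lee_fin.
apply: le_trans (@sum_diag_le R _ P _ _ _ _ fiber_le) _ => [p _|]; first exact: ln_nat_ge0.
apply: (@le_trans _ _ (2 * ln (b * N)%:R * ((b * N)%:R * ln 4))).
  apply: ler_wpM2l; first by rewrite mulr_ge0 ?ln_nat_ge0.
  apply: le_trans (sum_ln_primes_le _ _); apply: ler_sum_subpred => p.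
    by case/andP => /andP[].
  by move=> _; exact: ln_nat_ge0.
have := @ln_natM_le R b N N_gt1; rewrite natrM => ln_le.
have scale_ge0 : 0 <= 2 * b%:R * N%:R * ln 4 :> R.
  by apply: mulr_ge0 (ltW ln4_gt0); apply: mulr_ge0; first exact: mulr_ge0.
have := ler_wpM2r scale_ge0 ln_le; lra.
Qed.
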